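(* Let $\mathcal{X}=\prod_{r=1}^d\mathcal{Z}_r$ be a product of nonempty convex compact subsets of Euclidean spaces, $F$ an $L$-Lipschitz operator on $\mathcal{X}$ with components $F_r$, $B_F:=\max_r\sup_x\|F_r(x)\|_2$, and suppose the average $(\alpha,\ell,h)$-generalized Minty property with slackness $\gamma>0$ holds. Then after $T\in\mathbb{N}$ iterations of rescaled optimistic gradient descent with learning rate $\eta\le\frac14\sqrt{\frac{\ell}{h^3L^2+hB_F^2\alpha^2d}}$ there is an iterate $x^{(t)}$, $t\in\{1,\dots,T\}$, such that for every $x^\star\in\mathcal{X}$, $$\langle x^{(t)}-x^\star,F(x^{(t)})\rangle\le 2d\Big(\frac{\max_r D_{\mathcal{Z}_r}}{\eta\ell}+\frac{hB_F}{\ell}\Big)\sqrt{\frac{4\eta\gamma}{\ell}+\frac{2D_{\mathcal{X}}^2h}{\ell T}}.$$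
   Context: $D_{\mathcal{Y}}$ is the $\ell_2$ diameter of $\mathcal{Y}$. $\mathbf{1}_{\mathcal{Z}_r}$ is the indicator vector of the coordinates of $\mathcal{Z}_r$; $\circ$ is the coordinatewise product; vector inequalities are coordinatewise. $A(x)=\sum_r a_r(x)\mathbf{1}_{\mathcal{Z}_r}$ with each $a_r$ $\alpha$-Lipschitz and $0<\ell\le A(x)\le h$; $W(x)=\sum_r w_r(x)\mathbf{1}_{\mathcal{Z}_r}$ with $0<\ell\le W(x)\le h$. The average $(\alpha,\ell,h)$-generalized Minty property with slackness $\gamma$: for every $T$ and sequence $(x^{(t)})_{t\le T}$ in $\mathcal{X}$ there is $x^\star\in\mathcal{X}$ with $\frac1T\sum_{t=1}^T\langle x^{(t)}-x^\star,F(x^{(t)})\circ A(x^{(t)})\circ W(x^\star)\rangle\ge-\gamma$. Rescaled optimistic gradient descent: from arbitrary $x^{(0)}=\hat x^{(1)}\in\mathcal{X}$, $x^{(t)}=\Pi_{\mathcal{X}}(\hat x^{(t)}-\eta A(x^{(t-1)})\circ F(x^{(t-1)}))$, $\hat x^{(t+1)}=\Pi_{\mathcal{X}}(\hat x^{(t)}-\eta A(x^{(t)})\circ F(x^{(t)}))$ for $t\ge1$. *)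

From HB Require Import structures.
From mathcomp Require Import all_boot all_order all_algebra.
From mathcomp Require Import all_classical all_reals all_analysis.
Set Implicit Arguments. Unset Strict Implicit. Unset Printing Implicit Defensive.
Import Order.TTheory GRing.Theory Num.Theory.
Import numFieldNormedType.Exports.
Local Open Scope ring_scope.
Local Open Scope classical_set_scope.

(* The product
   X = prod_{r<d} Z_r is encoded by a block map blk : 'I_n -> 'I_d assigning
   each coordinate to its factor; Z_r lives in the coordinate subspace of
   block r (coordinates outside block r are zero). *)

Definition dotp (R : realType) n (u v : 'rV[R]_n) : R := \sum_i u ord0 i * v ord0 i.
Definition norm2 (R : realType) n (u : 'rV[R]_n) : R := Num.sqrt (dotp u u).

Definition hprod (R : realType) n (u v : 'rV[R]_n) : 'rV[R]_n :=
  \row_i (u ord0 i * v ord0 i).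

Definition ind (R : realType) n d (blk : 'I_n -> 'I_d) (r : 'I_d) : 'rV[R]_n :=
  \row_i (if blk i == r then 1 else 0).

Definition blockc (R : realType) n d (blk : 'I_n -> 'I_d) (r : 'I_d)
  (x : 'rV[R]_n) : 'rV[R]_n := hprod x (ind R blk r).

Definition blockfun (R : realType) n d (blk : 'I_n -> 'I_d)
  (c : 'I_d -> 'rV[R]_n -> R) (x : 'rV[R]_n) : 'rV[R]_n :=
  \sum_r c r x *: ind R blk r.

Definition in_block (R : realType) n d (blk : 'I_n -> 'I_d) (r : 'I_d)
  (Z : set 'rV[R]_n) : Prop :=
  forall z, Z z -> forall i, blk i != r -> z ord0 i = 0.

Definition prodset (R : realType) n d (blk : 'I_n -> 'I_d)
  (Z : 'I_d -> set 'rV[R]_n) : set 'rV[R]_n :=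
  [set x | forall r, Z r (blockc blk r x)].

Definition convex_Z (R : realType) n (Z : set 'rV[R]_n) : Prop :=
  forall x y, Z x -> Z y -> forall t : R, 0 <= t <= 1 ->
    Z (t *: x + (1 - t) *: y).

Definition diam2 (R : realType) n (Y : set 'rV[R]_n) : R :=
  sup [set e | exists x y, Y x /\ Y y /\ e = norm2 (x - y)].

Definition is_proj (R : realType) n (X : set 'rV[R]_n) (y p : 'rV[R]_n) : Prop :=
  X p /\ forall z, X z -> norm2 (y - p) <= norm2 (y - z).

Definition lip_on (R : realType) n (X : set 'rV[R]_n) (L : R)
  (F : 'rV[R]_n -> 'rV[R]_n) : Prop :=
  forall x y, X x -> X y -> norm2 (F x - F y) <= L * norm2 (x - y).

Definition lip_scal_on (R : realType) n (X : set 'rV[R]_n) (a : R)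
  (f : 'rV[R]_n -> R) : Prop :=
  forall x y, X x -> X y -> `|f x - f y| <= a * norm2 (x - y).

Definition BF (R : realType) n d (blk : 'I_n -> 'I_d) (X : set 'rV[R]_n)
  (F : 'rV[R]_n -> 'rV[R]_n) : R :=
  \big[Num.max/0]_(r < d) sup [set norm2 (blockc blk r (F x)) | x in X].

(* average (alpha,l,h)-generalized Minty property with slackness gamma,
   for the given A(x)=sum_r a_r(x)1_{Z_r}, W(x)=sum_r w_r(x)1_{Z_r} *)
Definition avg_minty (R : realType) n d (blk : 'I_n -> 'I_d) (X : set 'rV[R]_n)
  (F : 'rV[R]_n -> 'rV[R]_n) (a w : 'I_d -> 'rV[R]_n -> R)
  (alpha l h gamma : R) : Prop :=
  [/\ 0 < l,
      forall r, lip_scal_on X alpha (a r),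
      forall r x, X x -> l <= a r x <= h,
      forall r x, X x -> l <= w r x <= h &
      forall (T : nat) (xs : nat -> 'rV[R]_n),
        (forall t, (1 <= t <= T)%N -> X (xs t)) ->
        exists2 xs0, X xs0 &
          (T%:R)^-1 * \sum_(1 <= t < T.+1)
             dotp (xs t - xs0)
                  (hprod (hprod (F (xs t)) (blockfun blk a (xs t)))
                         (blockfun blk w xs0)) >= - gamma].

Definition rogd (R : realType) n d (blk : 'I_n -> 'I_d) (X : set 'rV[R]_n)
  (F : 'rV[R]_n -> 'rV[R]_n) (a : 'I_d -> 'rV[R]_n -> R) (eta : R)
  (x xh : nat -> 'rV[R]_n) : Prop :=
  [/\ X (x 0%N), xh 1%N = x 0%N &
      forall t, (1 <= t)%N ->
        is_proj X (xh t - eta *: hprod (blockfun blk a (x t.-1)) (F (x t.-1))) (x t)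
        /\ is_proj X (xh t - eta *: hprod (blockfun blk a (x t)) (F (x t))) (xh t.+1)].

From HB Require Import structures.
From mathcomp Require Import all_boot all_order all_algebra.
From mathcomp Require Import all_classical all_reals all_analysis.
From mathcomp Require Import ring lra.
Import Order.TTheory GRing.Theory Num.Theory.
Import numFieldNormedType.Exports.
Local Open Scope ring_scope.
Local Open Scope classical_set_scope.

(* Let x* be the point given by the Minty property for the first T iterates and
   measure distances in the norm weighted by W(x* ).  Since W is constant on each
   block and the projection onto the product set acts blockwise, every projection
   step of the method satisfies its variational inequality in this weighted norm.
   The one-step estimate of optimistic gradient descent, in which the Lipschitz
   bounds on F and on the a_r control the change of A o F between consecutive
   iterates (this is where the condition on eta enters), telescopes; with the
   Minty inequality it bounds l * sum_t (|x_t - xh_t|^2 + |x_t - xh_(t+1)|^2) by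
   2 h D_X^2 + 4 eta T gamma, so some iterate has residual at most the quantity
   under the square root.  For that iterate the projection inequality defining
   xh_(t+1), read block by block, bounds the gap by the residual. *)

Section InnerProduct.
Context {R : realType} {n : nat}.
Implicit Types (u v : 'rV[R]_n).

Lemma dotpC u v : dotp u v = dotp v u.
Proof. by apply: eq_bigr => i _; rewrite mulrC. Qed.

Lemma dotp_ge0 u : 0 <= dotp u u.
Proof. by apply: sumr_ge0 => i _; rewrite -expr2 sqr_ge0. Qed.

Lemma norm2_ge0 u : 0 <= norm2 u.
Proof. exact: sqrtr_ge0. Qed.

Lemma norm2_sq u : norm2 u ^+ 2 = dotp u u.
Proof. by rewrite sqr_sqrtr ?dotp_ge0. Qed.

Lemma dotp_le_sq {u} {K : R} : norm2 u <= K -> dotp u u <= K ^+ 2.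
Proof.
move=> uK; rewrite -norm2_sq lerXn2r ?nnegrE ?norm2_ge0 //.
exact: le_trans (norm2_ge0 u) uK.
Qed.

Lemma norm2_le_sqrt {u} {K : R} : dotp u u <= K -> norm2 u <= Num.sqrt K.
Proof. by move=> uK; rewrite ler_psqrt ?nnegrE ?dotp_ge0 // (le_trans (dotp_ge0 u)). Qed.

Lemma dotpD_le u v : dotp (u + v) (u + v) <= 2 * (dotp u u + dotp v v).
Proof.
rewrite /dotp -big_split mulr_sumr; apply: ler_sum => i _; rewrite !mxE.
have -> : 2 * (u ord0 i * u ord0 i + v ord0 i * v ord0 i)
  = (u ord0 i + v ord0 i) * (u ord0 i + v ord0 i) + (u ord0 i - v ord0 i) ^+ 2 by ring.
by rewrite lerDl sqr_ge0.
Qed.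

Lemma dotpB_le u v : dotp (u - v) (u - v) <= 2 * (dotp u u + dotp v v).
Proof.
have -> : dotp v v = dotp (- v) (- v) by apply: eq_bigr => i _; rewrite mxE mulrNN.
exact: dotpD_le.
Qed.

Lemma lagrange_identity u v :
  dotp u u * dotp v v - dotp u v ^+ 2 =
  2^-1 * \sum_i \sum_j (u ord0 i * v ord0 j - u ord0 j * v ord0 i) ^+ 2.
Proof.
pose f i j := u ord0 i ^+ 2 * v ord0 j ^+ 2.
pose g i j := u ord0 i * v ord0 i * (u ord0 j * v ord0 j).
have -> : dotp u u * dotp v v = \sum_i \sum_j f i j.
  by rewrite /dotp mulr_suml; apply: eq_bigr => i _; rewrite mulr_sumr;
    apply: eq_bigr => j _; rewrite /f !expr2.
have -> : dotp u v ^+ 2 = \sum_i \sum_j g i j.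
  by rewrite expr2 /dotp mulr_suml; apply: eq_bigr => i _; rewrite mulr_sumr.
have -> : \sum_i \sum_j (u ord0 i * v ord0 j - u ord0 j * v ord0 i) ^+ 2 =
          \sum_i \sum_j f i j + \sum_i \sum_j f j i - 2 * \sum_i \sum_j g i j.
  rewrite mulr_sumr -big_split -sumrB /=; apply: eq_bigr => i _.
  rewrite mulr_sumr -big_split -sumrB /=; apply: eq_bigr => j _.
  by rewrite /f /g; ring.
by rewrite [\sum_i \sum_j f j i]exchange_big /=; field.
Qed.

Lemma dotp_le_norm2 u v : dotp u v <= norm2 u * norm2 v.
Proof.
have uv_ge0 : 0 <= norm2 u * norm2 v by rewrite mulr_ge0 ?norm2_ge0.
apply: le_trans (ler_norm _) _; rewrite -(ler_pXn2r (n := 2)) ?nnegrE //.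
rewrite real_normK ?num_real // exprMn !norm2_sq -subr_ge0 lagrange_identity.
by rewrite mulr_ge0 // sumr_ge0 // => i _; rewrite sumr_ge0 // => j _; rewrite sqr_ge0.
Qed.

Lemma norm2N v : norm2 (- v) = norm2 v.
Proof. by congr Num.sqrt; apply: eq_bigr => i _; rewrite mxE mulrNN. Qed.

Lemma norm2D_le u v : norm2 (u + v) <= norm2 u + norm2 v.
Proof.
rewrite -(ler_pXn2r (n := 2)) ?nnegrE ?addr_ge0 ?norm2_ge0 //.
have -> : norm2 (u + v) ^+ 2 = norm2 u ^+ 2 + 2 * dotp u v + norm2 v ^+ 2.
  rewrite !norm2_sq /dotp mulr_sumr -!big_split /=.
  by apply: eq_bigr => i _; rewrite !mxE; ring.
have := dotp_le_norm2 u v; lra.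
Qed.

End InnerProduct.

Section Blocks.
Context {R : realType} {n d : nat} (blk : 'I_n -> 'I_d).
Implicit Types (u v : 'rV[R]_n) (r : 'I_d).

Lemma blockcE r u i : blockc blk r u ord0 i = if blk i == r then u ord0 i else 0.
Proof. by rewrite !mxE; case: eqP; rewrite ?mulr1 ?mulr0. Qed.

Lemma blockfunE (c : 'I_d -> 'rV[R]_n -> R) x i :
  blockfun blk c x ord0 i = c (blk i) x.
Proof.
rewrite summxE (bigD1 (blk i)) //= !mxE eqxx mulr1 big1 ?addr0 // => r.
by rewrite !mxE eq_sym => /negPf->; rewrite mulr0.
Qed.

Lemma sum_by_blocks (f : 'I_n -> R) :
  \sum_i f i = \sum_r \sum_i (if blk i == r then f i else 0).
Proof.
rewrite exchange_big /=; apply: eq_bigr => i _.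
by rewrite (bigD1 (blk i)) //= eqxx big1 ?addr0 // => r /negPf; rewrite eq_sym => ->.
Qed.

Lemma blockcB r u v : blockc blk r (u - v) = blockc blk r u - blockc blk r v.
Proof. by apply/rowP => i; rewrite !mxE; ring. Qed.

Lemma blockc_idem r u : blockc blk r (blockc blk r u) = blockc blk r u.
Proof. by apply/rowP => i; rewrite !blockcE; case: eqP. Qed.

Lemma dotp_blockc r u v : dotp (blockc blk r u) v = dotp u (blockc blk r v).
Proof. by apply: eq_bigr => i _; rewrite !blockcE; case: eqP; rewrite ?mul0r ?mulr0. Qed.

Lemma dotp_sum_blockc u v : dotp u v = \sum_r dotp (blockc blk r u) v.
Proof.
rewrite /dotp sum_by_blocks; apply: eq_bigr => r _; apply: eq_bigr => i _.
by rewrite blockcE; case: eqP; rewrite ?mul0r.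
Qed.

Lemma dotp_sum_blockc_sq u :
  dotp u u = \sum_r dotp (blockc blk r u) (blockc blk r u).
Proof.
rewrite dotp_sum_blockc; apply: eq_bigr => r _.
by rewrite -{1}blockc_idem dotp_blockc.
Qed.

Lemma dotp_blockc_le r u : dotp (blockc blk r u) (blockc blk r u) <= dotp u u.
Proof.
apply: ler_sum => i _; rewrite blockcE.
by case: eqP; rewrite ?mul0r // -expr2 sqr_ge0.
Qed.

Lemma norm2_blockc_le r u : norm2 (blockc blk r u) <= norm2 u.
Proof. by rewrite ler_sqrt ?dotp_ge0 ?dotp_blockc_le. Qed.

Lemma blockc_hprod_blockfun (c : 'I_d -> 'rV[R]_n -> R) x r u :
  blockc blk r (hprod (blockfun blk c x) u) = c r x *: blockc blk r u.
Proof.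
apply/rowP => i; rewrite [RHS]mxE !blockcE mxE blockfunE.
by case: eqP => [->|_]; rewrite ?mulr0.
Qed.

Lemma dotp_hprod_blockfun (c : 'I_d -> 'rV[R]_n -> R) x u :
  let v := hprod (blockfun blk c x) u in
  dotp v v = \sum_r c r x ^+ 2 * dotp (blockc blk r u) (blockc blk r u).
Proof.
rewrite /= dotp_sum_blockc_sq; apply: eq_bigr => r _.
rewrite blockc_hprod_blockfun /dotp mulr_sumr; apply: eq_bigr => i _.
by rewrite !mxE; ring.
Qed.

Definition rescaled (F : 'rV[R]_n -> 'rV[R]_n) (a : 'I_d -> 'rV[R]_n -> R) x :
  'rV[R]_n := hprod (blockfun blk a x) (F x).

Definition wdot (c u v : 'rV[R]_n) : R := \sum_i c ord0 i * (u ord0 i * v ord0 i).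

Lemma wdot_blockfun (w : 'I_d -> 'rV[R]_n -> R) x u v :
  wdot (blockfun blk w x) u v = \sum_r w r x * dotp (blockc blk r u) v.
Proof.
rewrite /wdot sum_by_blocks; apply: eq_bigr => r _; rewrite /dotp mulr_sumr.
apply: eq_bigr => i _; rewrite blockfunE blockcE.
by case: eqP => [->|_]; rewrite ?mul0r ?mulr0.
Qed.

Lemma wdot_le {c : 'rV[R]_n} (u : 'rV[R]_n) {h : R} :
  (forall i, c ord0 i <= h) -> wdot c u u <= h * dotp u u.
Proof.
move=> ch; rewrite /dotp mulr_sumr; apply: ler_sum => i _.
by rewrite ler_wpM2r // -expr2 sqr_ge0.
Qed.

Lemma wdot_ge {c : 'rV[R]_n} (u : 'rV[R]_n) {l : R} :
  (forall i, l <= c ord0 i) -> l * dotp u u <= wdot c u u.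
Proof.
move=> lc; rewrite /dotp mulr_sumr; apply: ler_sum => i _.
by rewrite ler_wpM2r // -expr2 sqr_ge0.
Qed.

End Blocks.

Lemma le0_of_le_scaled {R : realFieldType} (A E : R) :
  0 <= E -> (forall t, 0 < t <= 1 -> A <= t * E) -> A <= 0.
Proof.
move=> E0 AtE; rewrite leNgt; apply/negP => A_gt0.
have AE_gt0 : 0 < A + E by lra.
have := AtE (A / (A + E)).
rewrite divr_gt0 // ler_pdivrMr // mul1r lerDl E0 => /(_ isT).
rewrite mulrAC ler_pdivlMr // => H.
have : A * A <= 0 by lra.
by rewrite leNgt mulr_gt0.
Qed.

Lemma proj_dotp_le0 {R : realType} {n} {X : set 'rV[R]_n} {y p z} :
  convex_Z X -> is_proj X y p -> X z -> dotp (y - p) (z - p) <= 0.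
Proof.
move=> convX [Xp p_min] Xz.
apply: (@le0_of_le_scaled _ _ (2^-1 * dotp (z - p) (z - p))).
  by rewrite mulr_ge0 ?dotp_ge0.
move=> t /andP[t_gt0 t_le1].
have := p_min _ (convX _ _ Xz Xp t _); rewrite (ltW t_gt0) t_le1 => /(_ isT).
rewrite ler_sqrt ?dotp_ge0 //.
have -> : dotp (y - (t *: z + (1 - t) *: p)) (y - (t *: z + (1 - t) *: p)) =
    dotp (y - p) (y - p) - 2 * t * dotp (y - p) (z - p) + t ^+ 2 * dotp (z - p) (z - p).
  rewrite /dotp mulr_sumr mulr_sumr -sumrB -big_split /=.
  by apply: eq_bigr => i _; rewrite !mxE; ring.
by move=> H; rewrite -(ler_pM2l t_gt0); lra.
Qed.

Section Projection.
Context {R : realType} {n d : nat} {blk : 'I_n -> 'I_d}.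
Context {Z : 'I_d -> set 'rV[R]_n} (Zconv : forall r, convex_Z (Z r)).
Local Notation X := (prodset blk Z).

Lemma convex_prodset : convex_Z X.
Proof.
move=> x y Xx Xy t t01 r.
have -> : blockc blk r (t *: x + (1 - t) *: y) =
          t *: blockc blk r x + (1 - t) *: blockc blk r y.
  by apply/rowP => i; rewrite !mxE; case: eqP => _; ring.
exact: Zconv.
Qed.

Lemma prodset_splice r {p z} : X p -> X z -> X (p + blockc blk r (z - p)).
Proof.
move=> Xp Xz s.
have [<-|s_neq_r] := eqVneq s r.
  suff -> : blockc blk s (p + blockc blk s (z - p)) = blockc blk s z by [].
  by apply/rowP => i; rewrite !mxE; case: eqP => _; ring.
suff -> : blockc blk s (p + blockc blk r (z - p)) = blockc blk s p by [].
apply/rowP => i; rewrite !mxE.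
case: (blk i =P s) => [->|_]; last by rewrite !mulr0.
by rewrite (negPf s_neq_r); ring.
Qed.

Lemma proj_blockc_dotp_le0 r {y p z} :
  is_proj X y p -> X z -> dotp (blockc blk r (y - p)) (z - p) <= 0.
Proof.
(* Test the projection at the point that agrees with z on block r and with p elsewhere. *)
move=> p_proj Xz; rewrite dotp_blockc.
have := proj_dotp_le0 convex_prodset p_proj (prodset_splice r p_proj.1 Xz).
by rewrite addrAC subrr add0r.
Qed.

Lemma proj_wdot_le0 {w : 'I_d -> 'rV[R]_n -> R} {x0 y p z} :
  (forall r, 0 <= w r x0) -> is_proj X y p -> X z ->
  wdot (blockfun blk w x0) (y - p) (z - p) <= 0.
Proof.
move=> w_ge0 p_proj Xz; rewrite wdot_blockfun; apply: sumr_le0 => r _.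
by rewrite mulr_ge0_le0 ?proj_blockc_dotp_le0.
Qed.

End Projection.

Section OptimisticStep.
Context {R : realType} {n : nat}.
Implicit Types (c z u v : 'rV[R]_n).

Definition ogd_potential c z u v : R :=
  2^-1 * wdot c (u - z) (u - z) + 4^-1 * wdot c (v - u) (v - u).

Lemma optimistic_descent c (xt xh xh1 xp z g gp : 'rV[R]_n) (eta : R) :
  (forall i, 0 <= c ord0 i) ->
  wdot c (xh - eta *: gp - xt) (xh1 - xt) <= 0 ->
  wdot c (xh - eta *: g - xh1) (z - xh1) <= 0 ->
  wdot c (xh - eta *: g - xh1) (xt - xh1) <= 0 ->
  eta ^+ 2 * wdot c (g - gp) (g - gp) <=
    4^-1 * (wdot c (xt - xh) (xt - xh) + wdot c (xp - xh) (xp - xh)) ->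
  eta * wdot c g (xt - z)
    + 4^-1 * (wdot c (xt - xh) (xt - xh) + wdot c (xt - xh1) (xt - xh1))
  <= ogd_potential c z xh xp - ogd_potential c z xh1 xt.
Proof.
move=> c_ge0 vi_xt vi_xh1_z vi_xh1_xt small_increment; rewrite /ogd_potential.
set b2 := wdot c (xt - xh1) (xt - xh1).
set P := wdot c (g - gp) (xt - xh1).
have b2E : b2 = eta * P + wdot c (xh - eta *: gp - xt) (xh1 - xt)
                + wdot c (xh - eta *: g - xh1) (xt - xh1).
  rewrite /b2 /P /wdot !mulr_sumr -!big_split /=.
  by apply: eq_bigr => i _; rewrite !mxE; ring.
(* The condition on the step size is only used to absorb this cross term. *)
have young : eta * P <= 2^-1 * (eta ^+ 2 * wdot c (g - gp) (g - gp)) + 2^-1 * b2.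
  rewrite /P /b2 /wdot !mulr_sumr -big_split /=; apply: ler_sum => i _.
  rewrite !mxE; have := c_ge0 i.
  have := sqr_ge0 (eta * (g ord0 i - gp ord0 i) - (xt ord0 i - xh1 ord0 i)); nra.
have gapE : eta * wdot c g (xt - z) =
    2^-1 * wdot c (xh - z) (xh - z) - 2^-1 * wdot c (xh1 - z) (xh1 - z)
    - 2^-1 * b2 - 2^-1 * wdot c (xt - xh) (xt - xh)
    + eta * P + wdot c (xh - eta *: gp - xt) (xh1 - xt)
    + wdot c (xh - eta *: g - xh1) (z - xh1).
  rewrite /b2 /P /wdot !mulr_sumr -!sumrB -!big_split /=.
  by apply: eq_bigr => i _; rewrite !mxE; field.
lra.
Qed.

End OptimisticStep.

Section RescaledOperator.
Context {R : realType} {n d : nat} {blk : 'I_n -> 'I_d}.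
Context {F : 'rV[R]_n -> 'rV[R]_n} {a : 'I_d -> 'rV[R]_n -> R}.
Local Notation rescaled := (rescaled blk F a).

Lemma rescaled_increment_le {xt xp : 'rV[R]_n} {h L alpha B : R} :
  (forall r, 0 <= a r xt <= h) ->
  (forall r, `|a r xt - a r xp| <= alpha * norm2 (xt - xp)) ->
  norm2 (F xt - F xp) <= L * norm2 (xt - xp) ->
  (forall r, norm2 (blockc blk r (F xp)) <= B) ->
  dotp (rescaled xt - rescaled xp) (rescaled xt - rescaled xp) <=
    2 * (h ^+ 2 * L ^+ 2 + alpha ^+ 2 * B ^+ 2 * d%:R) * dotp (xt - xp) (xt - xp).
Proof.
move=> a_bnd a_lip F_lip F_bnd.
set E := dotp (xt - xp) (xt - xp).
have -> : rescaled xt - rescaled xp =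
    hprod (blockfun blk a xt) (F xt - F xp)
    + hprod (blockfun blk (fun r _ => a r xt - a r xp) xt) (F xp).
  by apply/rowP => i; rewrite !mxE !blockfunE; ring.
apply: le_trans (dotpD_le _ _) _.
have first_le : dotp (hprod (blockfun blk a xt) (F xt - F xp))
                     (hprod (blockfun blk a xt) (F xt - F xp)) <= h ^+ 2 * (L ^+ 2 * E).
  rewrite dotp_hprod_blockfun.
  apply: le_trans (_ : _ <= h ^+ 2 * dotp (F xt - F xp) (F xt - F xp)) _.
    rewrite [dotp (F xt - _) _](dotp_sum_blockc_sq blk) mulr_sumr.
    apply: ler_sum => r _; have /andP[a_ge0 a_le] := a_bnd r.
    by rewrite ler_wpM2r ?dotp_ge0 // lerXn2r ?nnegrE // (le_trans a_ge0 a_le).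
  rewrite ler_wpM2l ?sqr_ge0 //.
  by have := dotp_le_sq F_lip; rewrite exprMn norm2_sq.
have second_le : dotp (hprod (blockfun blk (fun r _ => a r xt - a r xp) xt) (F xp))
                      (hprod (blockfun blk (fun r _ => a r xt - a r xp) xt) (F xp))
                 <= alpha ^+ 2 * B ^+ 2 * d%:R * E.
  have -> : alpha ^+ 2 * B ^+ 2 * d%:R * E = \sum_(r < d) alpha ^+ 2 * E * B ^+ 2.
    by rewrite sumr_const card_ord -mulr_natr; ring.
  rewrite dotp_hprod_blockfun; apply: ler_sum => r _.
  apply: ler_pM (sqr_ge0 _) (dotp_ge0 _) _ (dotp_le_sq (F_bnd r)).
  rewrite -real_normK ?num_real // /E -norm2_sq -exprMn lerXn2r ?nnegrE //.
  exact: le_trans (normr_ge0 _) (a_lip r).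
lra.
Qed.

Lemma rescaled_step_le {c xt xp xh : 'rV[R]_n} {eta l h L alpha B : R} :
  0 < l -> l <= h -> (forall i, l <= c ord0 i <= h) ->
  (forall r, l <= a r xt <= h) ->
  (forall r, `|a r xt - a r xp| <= alpha * norm2 (xt - xp)) ->
  norm2 (F xt - F xp) <= L * norm2 (xt - xp) ->
  (forall r, norm2 (blockc blk r (F xp)) <= B) ->
  16 * eta ^+ 2 * (h ^+ 3 * L ^+ 2 + h * B ^+ 2 * alpha ^+ 2 * d%:R) <= l ->
  eta ^+ 2 * wdot c (rescaled xt - rescaled xp) (rescaled xt - rescaled xp) <=
    4^-1 * (wdot c (xt - xh) (xt - xh) + wdot c (xp - xh) (xp - xh)).
Proof.
move=> l_gt0 lh c_bnd a_bnd a_lip F_lip F_bnd eta_small.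
have h_ge0 : 0 <= h by lra.
set K := h ^+ 3 * L ^+ 2 + h * B ^+ 2 * alpha ^+ 2 * d%:R.
set E := dotp (xt - xp) (xt - xp).
have step_le : eta ^+ 2 * wdot c (rescaled xt - rescaled xp) (rescaled xt - rescaled xp)
               <= 2 * (eta ^+ 2 * K) * E.
  have -> : 2 * (eta ^+ 2 * K) * E =
      eta ^+ 2 * (h * (2 * (h ^+ 2 * L ^+ 2 + alpha ^+ 2 * B ^+ 2 * d%:R) * E)) by rewrite /K; ring.
  rewrite ler_wpM2l ?sqr_ge0 //.
  apply: le_trans (wdot_le _ (fun i => proj2 (andP (c_bnd i)))) _.
  rewrite ler_wpM2l // rescaled_increment_le // => r.
  by have /andP[l_le_a ->] := a_bnd r; rewrite andbT (le_trans (ltW l_gt0)).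
have E_le : l * E <= 2 * (wdot c (xt - xh) (xt - xh) + wdot c (xp - xh) (xp - xh)).
  have c_ge i := proj1 (andP (c_bnd i)).
  have := wdot_ge (xt - xh) c_ge; have := wdot_ge (xp - xh) c_ge.
  have := ler_wpM2l (ltW l_gt0) (dotpB_le (xt - xh) (xp - xh)).
  rewrite opprB addrA subrK -/E; lra.
have := ler_wpM2r (dotp_ge0 (xt - xp)) eta_small.
rewrite -/E -/K -mulrA => H; lra.
Qed.

End RescaledOperator.

Lemma exists_le_average {R : realType} (f : nat -> R) {T : nat} : (0 < T)%N ->
  exists2 t, (1 <= t <= T)%N & T%:R * f t <= \sum_(1 <= s < T.+1) f s.
Proof.
case: T => // T _.
case: (@arg_minP _ R 'I_T.+1 ord0 xpredT (fun i => f i.+1) isT) => i _ i_min.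
exists i.+1; first by rewrite /= ltn_ord.
have -> : T.+1%:R * f i.+1 = \sum_(j < T.+1) f i.+1.
  by rewrite sumr_const card_ord mulr_natl.
by rewrite big_add1 /= big_mkord; apply: ler_sum => j _; apply: i_min.
Qed.

Section Boundedness.
Context {R : realType} {n : nat}.
Implicit Types (u v : 'rV[R]_n) (A : set 'rV[R]_n).


Lemma norm2_le_mx_norm u : norm2 u <= Num.sqrt n%:R * `|u|.
Proof.
rewrite -[`|u|]ger0_norm // -sqrtr_sqr -sqrtrM // ler_sqrt ?mulr_ge0 ?sqr_ge0 //.
have -> : n%:R * `|u| ^+ 2 = \sum_(i < n) `|u| ^+ 2.
  by rewrite sumr_const card_ord mulr_natl.
apply: ler_sum => i _.
rewrite -expr2 -real_normK ?num_real // lerXn2r ?nnegrE //.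
have -> : `|u| = \big[Num.max/0]_ij `|u ij.1 ij.2| by rewrite -mx_normrE.
exact: (le_bigmax _ (fun ij : 'I_1 * 'I_n => `|u ij.1 ij.2|) (ord0, i)).
Qed.

Lemma compact_norm2_bounded {A} : compact A -> exists M, forall z, A z -> norm2 z <= M.
Proof.
move=> /compact_bounded [M [_ M_ub]]; exists (Num.sqrt n%:R * (M + 1)) => z Az.
apply: le_trans (norm2_le_mx_norm z) _; rewrite ler_wpM2l ?sqrtr_ge0 //.
by apply: M_ub => //; rewrite ltrDl.
Qed.

Lemma norm2_sub_le_diam2 {A} {M : R} {x y} :
  (forall z, A z -> norm2 z <= M) -> A x -> A y -> norm2 (x - y) <= diam2 A.
Proof.
move=> A_bnd Ax Ay; apply: ub_le_sup; last by exists x, y.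
exists (M + M) => _ [x' [y' [Ax' [Ay' ->]]]].
by apply: le_trans (norm2D_le _ _) _; rewrite norm2N lerD ?A_bnd.
Qed.

Lemma lip_on_norm2_bounded {A} {L M : R} {F : 'rV[R]_n -> 'rV[R]_n} {x0} :
  lip_on A L F -> A x0 -> (forall z, A z -> norm2 z <= M) ->
  forall y, A y -> norm2 (F y) <= norm2 (F x0) + `|L| * (M + M).
Proof.
move=> F_lip Ax0 A_bnd y Ay.
rewrite -[F y](addrNK (F x0)) addrC; apply: le_trans (norm2D_le _ _) _.
rewrite lerD2l; apply: le_trans (F_lip _ _ Ay Ax0) _.
apply: le_trans (ler_wpM2r (norm2_ge0 _) (ler_norm L)) _.
rewrite ler_wpM2l // (le_trans (norm2D_le _ _)) // norm2N lerD ?A_bnd //.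
Qed.

End Boundedness.

Section ProductBounds.
Context {R : realType} {n d : nat} (blk : 'I_n -> 'I_d).

Lemma prodset_norm2_bounded {Z : 'I_d -> set 'rV[R]_n} :
  (forall r, exists M, forall z, Z r z -> norm2 z <= M) ->
  exists M, forall y, prodset blk Z y -> norm2 y <= M.
Proof.
move=> /fin_all_exists [M M_ub]; exists (Num.sqrt (\sum_r M r ^+ 2)) => y Xy.
apply: norm2_le_sqrt; rewrite (dotp_sum_blockc_sq blk).
by apply: ler_sum => r _; apply: dotp_le_sq; apply: M_ub.
Qed.

Lemma norm2_blockc_le_BF {X : set 'rV[R]_n} {F : 'rV[R]_n -> 'rV[R]_n} {M : R} r {y} :
  (forall z, X z -> norm2 (F z) <= M) -> X y ->
  norm2 (blockc blk r (F y)) <= BF blk X F.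
Proof.
move=> F_bnd Xy; apply: le_trans (le_bigmax _ (fun r => sup _) r).
apply: ub_le_sup; last by exists y.
exists M => _ [z Xz <-]; exact: le_trans (norm2_blockc_le _ _ _) (F_bnd _ Xz).
Qed.

End ProductBounds.

Section Gap.
Context {R : realType} {n d : nat} {blk : 'I_n -> 'I_d}.
Context {Z : 'I_d -> set 'rV[R]_n} (Zconv : forall r, convex_Z (Z r)).
Context {F : 'rV[R]_n -> 'rV[R]_n} {a : 'I_d -> 'rV[R]_n -> R}.
Local Notation X := (prodset blk Z).

Lemma block_gap_le r {xt xh xh1 z : 'rV[R]_n} {eta l h B D S : R} :
  0 < eta -> 0 < l -> l <= a r xt <= h ->
  norm2 (blockc blk r (F xt)) <= B ->
  (forall z1 z2, Z r z1 -> Z r z2 -> norm2 (z1 - z2) <= D) ->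
  is_proj X (xh - eta *: rescaled blk F a xt) xh1 -> X z ->
  dotp (xt - xh) (xt - xh) + dotp (xt - xh1) (xt - xh1) <= S ->
  dotp (blockc blk r (F xt)) (xt - z) <= 2 * (D / (eta * l) + h * B / l) * Num.sqrt S.
Proof.
move=> eta_gt0 l_gt0 /andP[l_le_a a_le_h] F_le D_ub xh1_proj Xz res_le.
set g := blockc blk r (F xt); set s := Num.sqrt S.
have s_ge0 : 0 <= s := sqrtr_ge0 S.
have B_ge0 : 0 <= B := le_trans (norm2_ge0 _) F_le.
have norm_t1 : norm2 (xt - xh1) <= s.
  by apply: norm2_le_sqrt; have := dotp_ge0 (xt - xh); lra.
have norm_t : norm2 (xt - xh) <= s.
  by apply: norm2_le_sqrt; have := dotp_ge0 (xt - xh1); lra.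
have norm_h1 : norm2 (xh - xh1) <= 2 * s.
  have -> : xh - xh1 = (xh - xt) + (xt - xh1) by rewrite addrA subrK.
  by apply: le_trans (norm2D_le _ _) _; rewrite -opprB norm2N; lra.
have -> : dotp g (xt - z) = dotp g (xh1 - z) + dotp g (xt - xh1).
  by rewrite /dotp -big_split /=; apply: eq_bigr => i _; rewrite !mxE; ring.
have far_le : eta * a r xt * dotp g (xh1 - z) <= 2 * s * D.
  have := proj_blockc_dotp_le0 Zconv r xh1_proj Xz.
  have -> : dotp (blockc blk r (xh - eta *: rescaled blk F a xt - xh1)) (z - xh1) =
      eta * a r xt * dotp g (xh1 - z) - dotp (xh - xh1) (blockc blk r (xh1 - z)).
    rewrite -dotp_blockc /dotp mulr_sumr -sumrB; apply: eq_bigr => i _.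
    by rewrite !mxE blockfunE; case: eqP => [->|_]; ring.
  rewrite subr_le0 => /le_trans; apply; apply: le_trans (dotp_le_norm2 _ _) _.
  apply: ler_pM; rewrite ?norm2_ge0 // blockcB.
  by apply: D_ub; [exact: xh1_proj.1 r|exact: Xz r].
have near_le : dotp g (xt - xh1) <= 2 * (h * B / l) * s.
  apply: le_trans (dotp_le_norm2 _ _) _; apply: le_trans (ler_pM _ _ F_le norm_t1) _;
    rewrite ?norm2_ge0 //.
  have hBl : B <= h * B / l.
    by rewrite ler_pdivlMr // mulrC ler_wpM2r // (le_trans l_le_a a_le_h).
  by apply: ler_wpM2r => //; lra.
have D_ge0 : 0 <= D.
  by apply: le_trans (D_ub _ _ (xh1_proj.1 r) (xh1_proj.1 r)); apply: norm2_ge0.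
suff : dotp g (xh1 - z) <= 2 * (D / (eta * l)) * s by lra.
have [|far_gt0] := leP (dotp g (xh1 - z)) 0.
  by move/le_trans; apply; rewrite !mulr_ge0 ?invr_ge0 ?mulr_ge0 //; lra.
have -> : 2 * (D / (eta * l)) * s = 2 * s * D / (eta * l) by ring.
rewrite ler_pdivlMr ?mulr_gt0 //.
apply: le_trans far_le; rewrite mulrC ler_wpM2r //; [lra | by rewrite ler_wpM2l //; lra].
Qed.

Lemma gap_le {xt xh xh1 z : 'rV[R]_n} {eta l h B D S : R} :
  0 < eta -> 0 < l -> (forall r, l <= a r xt <= h) ->
  (forall r, norm2 (blockc blk r (F xt)) <= B) ->
  (forall r z1 z2, Z r z1 -> Z r z2 -> norm2 (z1 - z2) <= D) ->
  is_proj X (xh - eta *: rescaled blk F a xt) xh1 -> X z ->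
  dotp (xt - xh) (xt - xh) + dotp (xt - xh1) (xt - xh1) <= S ->
  dotp (xt - z) (F xt) <= 2 * d%:R * (D / (eta * l) + h * B / l) * Num.sqrt S.
Proof.
move=> eta_gt0 l_gt0 a_bnd F_le D_ub xh1_proj Xz res_le.
rewrite dotpC (dotp_sum_blockc blk).
have -> : 2 * d%:R * (D / (eta * l) + h * B / l) * Num.sqrt S =
    \sum_(r < d) 2 * (D / (eta * l) + h * B / l) * Num.sqrt S.
  by rewrite sumr_const card_ord -mulr_natr; ring.
apply: ler_sum => r _.
exact: (block_gap_le r eta_gt0 l_gt0 (a_bnd r) (F_le r) (D_ub r) xh1_proj Xz res_le).
Qed.

End Gap.

Section Trajectory.
Context {R : realType} {n d : nat} {blk : 'I_n -> 'I_d}.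
Context {Z : 'I_d -> set 'rV[R]_n} (Zconv : forall r, convex_Z (Z r)).
Context {F : 'rV[R]_n -> 'rV[R]_n} {a : 'I_d -> 'rV[R]_n -> R} {eta : R}.
Context {x xh : nat -> 'rV[R]_n} (run : rogd blk (prodset blk Z) F a eta x xh).
Local Notation X := (prodset blk Z).
Local Notation G t := (rescaled blk F a (x t)).

Lemma rogd_iterate_in t : X (x t).
Proof. by case: run t => [X0 _ step] [|t] //; exact: (step t.+1 isT).1.1. Qed.

Lemma rogd_extrapolated_in t : (0 < t)%N -> X (xh t).
Proof.
case: run t => [X0 xh1 step] [|[|t]] // _; first by rewrite xh1.
exact: (step t.+1 isT).2.1.
Qed.

Context {w : 'I_d -> 'rV[R]_n -> R} {xs : 'rV[R]_n}.
Context (Xxs : X xs) (w_ge0 : forall r, 0 <= w r xs).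
Local Notation c := (blockfun blk w xs).
Local Notation wsq u := (wdot c u u).
Local Notation residual t := (wsq (x t - xh t) + wsq (x t - xh t.+1)).
Local Notation potential t := (ogd_potential c xs (xh t) (x t.-1)).

Lemma rogd_descent t : (0 < t)%N ->
  eta ^+ 2 * wsq (G t - G t.-1) <= 4^-1 * (wsq (x t - xh t) + wsq (x t.-1 - xh t)) ->
  eta * wdot c (G t) (x t - xs) + 4^-1 * residual t <= potential t - potential t.+1.
Proof.
case: t => // t _ step_small; have [_ _ /(_ t.+1 isT)[x_proj xh_proj]] := run.
have c_ge0 i : 0 <= c ord0 i by rewrite blockfunE.
apply: optimistic_descent step_small => //.
- exact: (proj_wdot_le0 Zconv w_ge0 x_proj (rogd_extrapolated_in t.+2 isT)).
- exact: (proj_wdot_le0 Zconv w_ge0 xh_proj Xxs).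
- exact: (proj_wdot_le0 Zconv w_ge0 xh_proj (rogd_iterate_in t.+1)).
Qed.

Lemma rogd_residual_sum_le {T : nat} {gamma h D : R} :
  0 <= eta -> 0 <= h -> (forall i, c ord0 i <= h) -> norm2 (x 0%N - xs) <= D ->
  (forall t, (0 < t <= T)%N ->
     eta ^+ 2 * wsq (G t - G t.-1) <= 4^-1 * (wsq (x t - xh t) + wsq (x t.-1 - xh t))) ->
  - (T%:R * gamma) <= \sum_(1 <= t < T.+1) wdot c (G t) (x t - xs) ->
  \sum_(1 <= t < T.+1) residual t <= 2 * h * D ^+ 2 + 4 * eta * (T%:R * gamma).
Proof.
move=> eta_ge0 h_ge0 c_le D_ub step_small minty_sum.
have c_ge0 i : 0 <= c ord0 i by rewrite blockfunE.
have wsq_ge0 u : 0 <= wsq u.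
  by apply: sumr_ge0 => i _; rewrite mulr_ge0 // -expr2 sqr_ge0.
have telescoped : \sum_(1 <= t < T.+1) (eta * wdot c (G t) (x t - xs) + 4^-1 * residual t)
                  <= potential 1%N - potential T.+1.
  have -> : potential 1%N - potential T.+1 =
            \sum_(1 <= t < T.+1) (potential t - potential t.+1).
    by rewrite (telescope_sumr_eq (fun t => - potential t)) // => [|t _];
      rewrite opprK addrC.
  apply: ler_sum_nat => t /andP[t_gt0 tT].
  by apply: rogd_descent => //; apply: step_small; rewrite t_gt0 -ltnS.
have first_potential : potential 1%N <= 2^-1 * (h * D ^+ 2).
  have [_ -> _] := run; rewrite /ogd_potential /= subrr.
  have -> : wsq 0 = 0 by apply: big1 => i _; rewrite mxE !mul0r mulr0.
  rewrite mulr0 addr0 ler_wpM2l // (le_trans (wdot_le _ c_le)) //.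
  by rewrite ler_wpM2l ?dotp_le_sq.
have last_potential : 0 <= potential T.+1 by rewrite addr_ge0 ?mulr_ge0.
move: telescoped; rewrite big_split /= -mulr_sumr -mulr_sumr.
have := ler_wpM2l eta_ge0 minty_sum; lra.
Qed.

Lemma rogd_exists_small_residual {T : nat} {gamma l h D : R} :
  (0 < T)%N -> 0 < eta -> 0 < l -> l <= h -> (forall i, l <= c ord0 i <= h) ->
  norm2 (x 0%N - xs) <= D ->
  (forall t, (0 < t <= T)%N ->
     eta ^+ 2 * wsq (G t - G t.-1) <= 4^-1 * (wsq (x t - xh t) + wsq (x t.-1 - xh t))) ->
  - (T%:R * gamma) <= \sum_(1 <= t < T.+1) wdot c (G t) (x t - xs) ->
  exists2 t, (1 <= t <= T)%N &
    dotp (x t - xh t) (x t - xh t) + dotp (x t - xh t.+1) (x t - xh t.+1)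
    <= 4 * eta * gamma / l + 2 * D ^+ 2 * h / (l * T%:R).
Proof.
move=> T_gt0 eta_gt0 l_gt0 l_le_h c_bnd D_ub step_small minty_sum.
have c_ge i := proj1 (andP (c_bnd i)); have c_le i := proj2 (andP (c_bnd i)).
have h_ge0 : 0 <= h by lra.
have := rogd_residual_sum_le (ltW eta_gt0) h_ge0 c_le D_ub step_small minty_sum.
have [t tT avg_le] := exists_le_average (fun t => residual t) T_gt0.
move=> /(le_trans avg_le) res_le; exists t => //.
have lT_gt0 : 0 < l * T%:R by rewrite mulr_gt0 ?ltr0n.
have -> : 4 * eta * gamma / l + 2 * D ^+ 2 * h / (l * T%:R) =
          (2 * h * D ^+ 2 + 4 * eta * (T%:R * gamma)) / (l * T%:R).
  by field; rewrite gt_eqF ?ltr0n ?(gt_eqF l_gt0).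
rewrite ler_pdivlMr //; set A := dotp _ _ + dotp _ _.
have -> : A * (l * T%:R) = T%:R * (l * A) by ring.
apply: le_trans res_le; rewrite ler_pM2l ?ltr0n //.
by rewrite mulrDr lerD ?wdot_ge.
Qed.

End Trajectory.

Lemma minty_sum_wdot {R : realType} {n d : nat} {blk : 'I_n -> 'I_d}
    {F : 'rV[R]_n -> 'rV[R]_n} {a w : 'I_d -> 'rV[R]_n -> R}
    {x : nat -> 'rV[R]_n} {xs : 'rV[R]_n} {T : nat} {gamma : R} :
  (0 < T)%N ->
  - gamma <= T%:R^-1 * \sum_(1 <= t < T.+1)
     dotp (x t - xs) (hprod (hprod (F (x t)) (blockfun blk a (x t))) (blockfun blk w xs)) ->
  - (T%:R * gamma) <=
    \sum_(1 <= t < T.+1) wdot (blockfun blk w xs) (rescaled blk F a (x t)) (x t - xs).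
Proof.
move=> T_gt0; rewrite ler_pdivlMl ?ltr0n // mulrN => /le_trans; apply.
rewrite le_eqVlt; apply: predU1l; apply: eq_bigr => t _; apply: eq_bigr => i _.
by rewrite !mxE; ring.
Qed.

Theorem corollary3 (R : realType) (n d : nat) (blk : 'I_n -> 'I_d)
  (Z : 'I_d -> set 'rV[R]_n)
  (HZblk : forall r, in_block blk r (Z r))
  (HZne : forall r, Z r !=set0)
  (HZconv : forall r, convex_Z (Z r))
  (HZcpt : forall r, @compact 'rV[R]_n (Z r))
  (F : 'rV[R]_n -> 'rV[R]_n) (L : R)
  (HF : lip_on (prodset blk Z) L F)
  (a w : 'I_d -> 'rV[R]_n -> R) (alpha l h gamma : R)
  (Hgamma : 0 < gamma)
  (Hminty : avg_minty blk (prodset blk Z) F a w alpha l h gamma)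
  (eta : R) (Heta0 : 0 < eta)
  (Heta : 16 * eta ^+ 2 * (h ^+ 3 * L ^+ 2
              + h * BF blk (prodset blk Z) F ^+ 2 * alpha ^+ 2 * d%:R) <= l)
  (x xh : nat -> 'rV[R]_n)
  (Hrun : rogd blk (prodset blk Z) F a eta x xh)
  (T : nat) (HT : (1 <= T)%N) :
  exists2 t : nat, (1 <= t <= T)%N &
    forall xs : 'rV[R]_n, prodset blk Z xs ->
      dotp (x t - xs) (F (x t)) <=
        2 * d%:R * ((\big[Num.max/0]_(r < d) diam2 (Z r)) / (eta * l)
                    + h * BF blk (prodset blk Z) F / l)
        * Num.sqrt (4 * eta * gamma / l
                    + 2 * diam2 (prodset blk Z) ^+ 2 * h / (l * T%:R)).
Proof.
case: Hminty => [l_gt0 a_lip a_bnd w_bnd minty].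
have Xx := rogd_iterate_in Hrun.
have [d0|d_gt0] := posnP d.
  exists 1%N => // z _; have -> : d%:R = 0 :> R by rewrite d0.
  rewrite mulr0 !mul0r dotpC (dotp_sum_blockc blk) big1 // => r _.
  by have := ltn_ord r; rewrite [X in (_ < X)%N]d0.
have l_le_h : l <= h by have /andP[] := a_bnd (Ordinal d_gt0) _ (Xx 0%N); apply: le_trans.
have [M M_ub] := prodset_norm2_bounded blk (fun r => compact_norm2_bounded (HZcpt r)).
have B_ub r y : prodset blk Z y -> norm2 (blockc blk r (F y)) <= BF blk (prodset blk Z) F.
  exact: norm2_blockc_le_BF (lip_on_norm2_bounded HF (Xx 0%N) M_ub).
have D_ub r z1 z2 : Z r z1 -> Z r z2 ->
    norm2 (z1 - z2) <= \big[Num.max/0]_(r < d) diam2 (Z r).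
  have [Mr Mr_ub] := compact_norm2_bounded (HZcpt r).
  by move=> Zz1 Zz2; apply: le_trans (norm2_sub_le_diam2 Mr_ub Zz1 Zz2) (le_bigmax _ _ r).
have [xs Xxs /(minty_sum_wdot HT) minty_xs] := minty T x (fun t _ => Xx t).
have c_bnd i : l <= blockfun blk w xs ord0 i <= h by rewrite blockfunE w_bnd.
have w_ge0 r : 0 <= w r xs by have /andP[] := w_bnd r _ Xxs; lra.
pose step_small t (_ : (0 < t <= T)%N) :=
  rescaled_step_le (xh := xh t) l_gt0 l_le_h c_bnd (fun r => a_bnd r _ (Xx t))
    (fun r => a_lip r _ _ (Xx t) (Xx t.-1)) (HF _ _ (Xx t) (Xx t.-1))
    (fun r => B_ub r _ (Xx t.-1)) Heta.
have [t tT res_le] := rogd_exists_small_residual HZconv Hrun Xxs w_ge0 HT Heta0 l_gt0 l_le_h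
  c_bnd (norm2_sub_le_diam2 M_ub (Xx 0%N) Xxs) step_small minty_xs.
exists t => // z Xz; have [_ _ /(_ t (proj1 (andP tT)))[_ xh_proj]] := Hrun.
exact: (gap_le HZconv Heta0 l_gt0 (fun r => a_bnd r _ (Xx t)) (fun r => B_ub r _ (Xx t))
  D_ub xh_proj Xz res_le).
Qed.
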